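(* Let $f^u_1,f^u_2$ be maps with $f^u_i(x)\in\mathcal U(x)$ for all $x\in\mathcal X$, $i=1,2$, and let $\hat J_{i,1}\subseteq\hat J_{i,2}\subseteq J=\{1,\dots,n_u+m_u\}$ for $i=1,2$. For $\hat J\subseteq J$ let $\mathcal U^{f^u_i}(x|u_{\hat J})=\mathcal U(x)\cap\{u: u_j=f^u_i(x)_j\ \forall j\in\hat J\}$. Then $w_R\le w\big(\cdot,\ \mathcal U^{f^u_1}(\cdot|u_{\hat J_{1,2}})\cup\mathcal U^{f^u_2}(\cdot|u_{\hat J_{2,2}}),\ \cdot\big)\le w\big(\cdot,\ \mathcal U^{f^u_1}(\cdot|u_{\hat J_{1,1}})\cup\mathcal U^{f^u_2}(\cdot|u_{\hat J_{2,1}}),\ \cdot\big)\le w^*$.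
   Context: Let $\mathcal X=\{x\in\mathbb R^{n_x}_+\times\mathbb Z^{m_x}_+: Ax\ge b\}$. For each $x$ let $\mathcal U(x)=\{u=(u_c,u_d)\in\mathbb R^{n_u}_+\times\mathbb U_d: F_c(x)u_c+F_d(x)u_d\le h+Gx\}$ and $\mathcal Y(x,u)=\{y=(y_c,y_d)\in\mathbb R^{n_y}_+\times\mathbb Y_d: B_{2,c}y_c+B_{2,d}y_d\ge d-B_1x-E_cu_c-E_du_d\}$, where $\mathbb U_d\subseteq\mathbb Z^{m_u}_+$, $\mathbb Y_d\subseteq\mathbb Z^{m_y}_+$ are bounded, $F_c(x),F_d(x)$ depend on $x$, other data fixed, $c_1,c_2$ row vectors. Components of $u$ are indexed by $J=\{1,\dots,n_u+m_u\}$. For a point-to-set map $\mathcal U'(\cdot)$, $w(\cdot,\mathcal U',\cdot)=\min_{x\in\mathcal X}\big[c_1x+\max_{u\in\mathcal U'(x)}\min_{y\in\mathcal Y(x,u)}c_2y\big]$ (minimum over empty set $=+\infty$); $w^*=w(\cdot,\mathcal U,\cdot)$; $w_R=\min\{c_1x+c_2y: x\in\mathcal X,u\in\mathcal U(x),y\in\mathcal Y(x,u)\}$. Standing assumptions: $\mathcal U(x)\neq\emptyset$ and bounded for all $x\in\mathcal X$, and $w_R>-\infty$. *)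

From HB Require Import structures.
From mathcomp Require Import all_boot all_order all_algebra.
From mathcomp Require Import classical_sets boolp reals constructive_ereal ereal.
Set Implicit Arguments. Unset Strict Implicit. Unset Printing Implicit Defensive.
Import Order.TTheory GRing.Theory Num.Theory.
Local Open Scope ring_scope.
Local Open Scope classical_set_scope.

Definition mxle (R : realType) (k : nat) (a b : 'cV[R]_k) : Prop :=
  forall i : 'I_k, a i 0 <= b i 0.

Definition nnint_vec (R : realType) (k : nat) (v : 'cV[R]_k) : Prop :=
  forall i : 'I_k, 0 <= v i 0 /\ v i 0 \is a Num.int.

Definition nonneg_vec (R : realType) (k : nat) (v : 'cV[R]_k) : Prop :=
  forall i : 'I_k, 0 <= v i 0.

Definition bounded_vecs (R : realType) (k : nat) (S : set 'cV[R]_k) : Prop :=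
  exists M : R, forall v, S v -> forall i : 'I_k, `|v i 0| <= M.

(* Problem data. x = (x_c ; x_d) in 'cV_(nx+mx), u = (u_c ; u_d) in
   'cV_(nu+mu), y = (y_c ; y_d) in 'cV_(ny+my).  p, q, r are the numbers of
   constraint rows of X, U(x), Y(x,u). *)
Record problem (R : realType) (nx mx nu mu ny my p q r : nat) := Problem {
  pA : 'M[R]_(p, nx + mx);
  pb : 'cV[R]_p;
  pFc : 'cV[R]_(nx + mx) -> 'M[R]_(q, nu);
  pFd : 'cV[R]_(nx + mx) -> 'M[R]_(q, mu);
  ph : 'cV[R]_q;
  pG : 'M[R]_(q, nx + mx);
  pUd : set 'cV[R]_mu;
  pB1 : 'M[R]_(r, nx + mx);
  pB2c : 'M[R]_(r, ny);
  pB2d : 'M[R]_(r, my);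
  pd : 'cV[R]_r;
  pEc : 'M[R]_(r, nu);
  pEd : 'M[R]_(r, mu);
  pYd : set 'cV[R]_my;
  pc1 : 'rV[R]_(nx + mx);
  pc2 : 'rV[R]_(ny + my)
}.

Section Sets.
Variables (R : realType) (nx mx nu mu ny my p q r : nat).
Variable P : problem R nx mx nu mu ny my p q r.

Definition Xset : set 'cV[R]_(nx + mx) :=
  [set x | nonneg_vec (usubmx x) /\ nnint_vec (dsubmx x) /\
           mxle (pb P) (pA P *m x)].

Definition Uset (x : 'cV[R]_(nx + mx)) : set 'cV[R]_(nu + mu) :=
  [set u | nonneg_vec (usubmx u) /\ pUd P (dsubmx u) /\
           mxle (pFc P x *m usubmx u + pFd P x *m dsubmx u)
                (ph P + pG P *m x)].

Definition Yset (x : 'cV[R]_(nx + mx)) (u : 'cV[R]_(nu + mu))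
  : set 'cV[R]_(ny + my) :=
  [set y | nonneg_vec (usubmx y) /\ pYd P (dsubmx y) /\
           mxle (pd P - pB1 P *m x - pEc P *m usubmx u - pEd P *m dsubmx u)
                (pB2c P *m usubmx y + pB2d P *m dsubmx y)].

Definition cost1 (x : 'cV[R]_(nx + mx)) : R := (pc1 P *m x) 0 0.
Definition cost2 (y : 'cV[R]_(ny + my)) : R := (pc2 P *m y) 0 0.

(* w(., U', .) = inf_{x in X} [ c1 x + sup_{u in U'(x)} inf_{y in Y(x,u)} c2 y ],
   with min/max read as inf/sup in the extended reals (inf over empty = +oo). *)
Definition wval (U' : 'cV[R]_(nx + mx) -> set 'cV[R]_(nu + mu)) : \bar R :=
  ereal_inf [set ((cost1 x)%:E +
                  ereal_sup [set ereal_inf [set (cost2 y)%:E | y in Yset x u]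
                            | u in U' x])%E
            | x in Xset].

Definition wstar : \bar R := wval Uset.

Definition wR : \bar R :=
  ereal_inf [set e : \bar R | exists x u y, Xset x /\ Uset x u /\ Yset x u y /\
                                e = (cost1 x + cost2 y)%:E].

Definition Ufix (f : 'cV[R]_(nx + mx) -> 'cV[R]_(nu + mu))
  (Jh : {set 'I_(nu + mu)}) (x : 'cV[R]_(nx + mx)) : set 'cV[R]_(nu + mu) :=
  Uset x `&` [set u | forall j, j \in Jh -> u j 0 = f x j 0].

Definition standing : Prop :=
  pUd P `<=` (@nnint_vec R mu) /\ bounded_vecs (pUd P) /\
  pYd P `<=` (@nnint_vec R my) /\ bounded_vecs (pYd P) /\
  (forall x, Xset x -> Uset x !=set0 /\ bounded_vecs (Uset x)) /\
  (-oo < wR)%E.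

End Sets.

From HB Require Import structures.
From mathcomp Require Import all_boot all_order all_algebra.
From mathcomp Require Import classical_sets boolp reals constructive_ereal ereal.
Import Order.TTheory GRing.Theory Num.Theory.
Local Open Scope ring_scope.
Local Open Scope classical_set_scope.

(* w(., U', .) is monotone in U': enlarging each U'(x) can only raise the inner
   supremum.  Fixing more coordinates shrinks U^f(x | u_J), which gives the two
   middle inequalities.  For the lower bound, f1(x) lies in U'(x) and in U(x),
   and any x, u in U(x), y in Y(x,u) is feasible for the relaxation defining
   w_R. *)

Section MinMaxMin.
Variables (R : realType) (nx mx nu mu ny my p q r : nat).
Variable P : problem R nx mx nu mu ny my p q r.

Lemma wval_le (U1 U2 : 'cV[R]_(nx + mx) -> set 'cV[R]_(nu + mu)) :
  (forall x, Xset P x -> U1 x `<=` U2 x) -> (wval P U1 <= wval P U2)%E.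
Proof.
move=> U12; apply: le_ereal_inf_tmp => _ [x Xx <-].
apply: le_trans (ereal_inf_lbound _) _; first by exists x.
apply: leeD2l; apply: ereal_sup_le => _ [u U1u <-].
by exists u => //; apply: U12.
Qed.

Lemma wR_le_cost1D_inf_cost2 {x u} : Xset P x -> Uset P x u ->
  (wR P <= (cost1 P x)%:E + ereal_inf [set (cost2 P y)%:E | y in Yset P x u])%E.
Proof.
move=> Xx Uu; rewrite -leeBlDl //; apply: le_ereal_inf_tmp => _ [y Yy <-].
rewrite leeBlDl // -EFinD.
by apply: ereal_inf_lbound; exists x, u, y.
Qed.

Lemma wR_le_wval (U' : 'cV[R]_(nx + mx) -> set 'cV[R]_(nu + mu)) :
  (forall x, Xset P x -> exists2 u, U' x u & Uset P x u) ->
  (wR P <= wval P U')%E.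
Proof.
move=> U'U; apply: le_ereal_inf_tmp => _ [x Xx <-].
have [u U'u Uu] := U'U x Xx.
apply: le_trans (wR_le_cost1D_inf_cost2 Xx Uu) _; apply: leeD2l.
by apply: ereal_sup_ubound; exists u.
Qed.

Lemma Ufix_subset f (J J' : {set 'I_(nu + mu)}) x :
  J \subset J' -> Ufix P f J' x `<=` Ufix P f J x.
Proof.
move=> JJ' u [Uu fixu]; split=> // j Jj.
by apply: fixu; apply: (fintype.subsetP JJ').
Qed.

End MinMaxMin.

Theorem corollary5 (R : realType) (nx mx nu mu ny my p q r : nat)
  (P : problem R nx mx nu mu ny my p q r)
  (Hstd : standing P)
  (f1 f2 : 'cV[R]_(nx + mx) -> 'cV[R]_(nu + mu))
  (Hf1 : forall x, Xset P x -> Uset P x (f1 x))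
  (Hf2 : forall x, Xset P x -> Uset P x (f2 x))
  (J11 J12 J21 J22 : {set 'I_(nu + mu)})
  (HJ1 : J11 \subset J12) (HJ2 : J21 \subset J22) :
  let w2 := wval P (fun x => Ufix P f1 J12 x `|` Ufix P f2 J22 x) in
  let w1 := wval P (fun x => Ufix P f1 J11 x `|` Ufix P f2 J21 x) in
  (wR P <= w2 /\ w2 <= w1 /\ w1 <= wstar P)%E.
Proof.
move=> w2 w1; split; last split.
- apply: wR_le_wval => x Xx; exists (f1 x); last exact: Hf1.
  by left; split; [apply: Hf1 |].
- by apply: wval_le => x _; apply: setUSS; apply: Ufix_subset.
- by apply: wval_le => x _; rewrite subUset; split; apply: subIsetl.
Qed.
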